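(* Let $\mathbf{x}$ be a random vector in $\mathbb{R}^d$ and let $\beta\in\mathbb{R}^d$ be a fixed vector. Let $\mathcal{S}_1,\dots,\mathcal{S}_m\subset\{1,\dots,d\}$ be non-empty, pairwise disjoint index sets with $d_i=|\mathcal{S}_i|$, and for each $i$ let $\mathbf{x}^{(i)}=[\mathbf{x}_r, r\in\mathcal{S}_i]\in\mathbb{R}^{d_i}$ and $\beta^{(i)}=[\beta_r, r\in\mathcal{S}_i]\in\mathbb{R}^{d_i}$. Assume $\mathbf{x}^{(i)}$ has probability density $p_i$ with respect to Lebesgue measure $\mu_i$ on $\mathbb{R}^{d_i}$. For each $i$, fix a number of levels $K_i$ and consider quantizers $Q_i:\mathbb{R}^{d_i}\to\{c^{(i)}_1,\dots,c^{(i)}_{K_i}\}$ of the form $Q_i(x^{(i)})=c^{(i)}_k$ if $x^{(i)}\in\mathcal{D}^{(i)}_k$, where $c^{(i)}_k\in\mathbb{R}^{d_i}$ and $\mathcal{D}^{(i)}_1,\dots,\mathcal{D}^{(i)}_{K_i}$ partition $\mathbb{R}^{d_i}$. Set $\hat{\mathbf y}=\langle \mathbf{x},\beta\rangle$, $\tilde{\mathbf{x}}^{(i)}=Q_i(\mathbf{x}^{(i)})$, and $\tilde{\mathbf y}=\sum_{i=1}^m\langle\tilde{\mathbf{x}}^{(i)},\beta^{(i)}\rangle$ (i.e. $\langle\tilde{\mathbf x},\beta\rangle$ where $\tilde{\mathbf x}$ is the vector obtained by replacing each block $\mathbf x^{(i)}$ by $\tilde{\mathbf x}^{(i)}$). Let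 $Q_1,\dots,Q_m$ be optimal quantizers for the problem $\min_{Q_1,\dots,Q_m}\mathbb{E}[(\tilde{\mathbf y}-\hat{\mathbf y})^2]$. Then simultaneously for every $i\in\{1,\dots,m\}$, $Q_i$ has the structure $$Q_i(x^{(i)})=\bar c^{(i)}_k\quad\text{if } x^{(i)}\in\bar{\mathcal{D}}^{(i)}_k,\ k\in\{1,\dots,K_i\},$$ where $\bar c^{(i)}_k$ and $\bar{\mathcal D}^{(i)}_k$ are minimizers of $$\min_{c^{(i)}_k,\mathcal{D}^{(i)}_k}\sum_{k=1}^{K_i}\int_{\mathcal{D}^{(i)}_k} f_i(c^{(i)}_k,x^{(i)})\,p_i(x^{(i)})\,d\mu_i(x^{(i)}),$$ with $$f_i(c,x^{(i)})=\mathbb{E}\Big[\Big(\langle c-x^{(i)},\beta^{(i)}\rangle+\sum_{i'\neq i}\langle\tilde{\mathbf{x}}^{(i')}-\mathbf{x}^{(i')},\beta^{(i')}\rangle\Big)^2\,\Big|\,\mathbf{x}^{(i)}=x^{(i)}\Big],$$ where for $i'\neq i$, $\tilde{\mathbf{x}}^{(i')}=Q_{i'}(\mathbf{x}^{(i')})$ is obtained from the optimal quantizer $Q_{i'}$.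
   Context: Expectations are over the distribution of $\mathbf{x}$ with $\beta$ held fixed. $\langle\cdot,\cdot\rangle$ denotes the Euclidean inner product. The minimization defining $\bar c^{(i)}_k,\bar{\mathcal D}^{(i)}_k$ is over codepoints $c^{(i)}_k\in\mathbb{R}^{d_i}$ and partitions $\{\mathcal D^{(i)}_k\}_{k=1}^{K_i}$ of $\mathbb{R}^{d_i}$, with the other quantizers $Q_{i'}$, $i'\neq i$, fixed at their optimal values. *)

From HB Require Import structures.
From mathcomp Require Import all_boot all_order all_algebra.
From mathcomp Require Import all_classical all_reals all_analysis.
From mathcomp Require Import measurable_realfun.
Set Implicit Arguments. Unset Strict Implicit. Unset Printing Implicit Defensive.
Import Order.TTheory GRing.Theory Num.Theory.
Import numFieldNormedType.Exports.
Local Open Scope classical_set_scope.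
Local Open Scope ring_scope.

Section Defs.
Variable R : realType.

(* vectors of R^n are represented as n.-tuple R (product Borel sigma-algebra) *)
Definition dot (n : nat) (u v : n.-tuple R) : R := \sum_(j < n) tnth u j * tnth v j.

Definition tsub (n : nat) (u v : n.-tuple R) : n.-tuple R :=
  [tuple tnth u j - tnth v j | j < n].

(* the block [v_r, r in A] (indices of A in increasing order) *)
Definition blk (d : nat) (A : {set 'I_d}) (v : d.-tuple R) : #|A|.-tuple R :=
  [tuple tnth v (enum_val j) | j < #|A|].

(* mu is the Lebesgue measure on R^n: it gives measurable boxes the product
   of the (one-dimensional) Lebesgue measures of their sides; this
   characterizes the n-dimensional Lebesgue measure on the Borel sets. *)
Definition is_lebesgue_tuple (n : nat)
    (mu : {measure set (n.-tuple R) -> \bar R}) : Prop :=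
  forall A : 'I_n -> set R, (forall j, measurable (A j)) ->
    mu [set x | forall j, A j (tnth x j)] = (\prod_(j < n) lebesgue_measure (A j))%E.

Record quantizer (K n : nat) := Quantizer {
  qc : 'I_K -> n.-tuple R ;
  qD : 'I_K -> set (n.-tuple R) }.

Definition valid_quantizer (K n : nat) (q : quantizer K n) : Prop :=
  (forall k, measurable (qD q k)) /\
  (forall k l, k != l -> qD q k `&` qD q l = set0) /\
  (forall x, exists k, qD q k x).

(* Q(x) = c_k if x in D_k *)
Definition quantize (K n : nat) (q : quantizer K n) (x : n.-tuple R) : n.-tuple R :=
  [tuple \sum_(k < K) \1_(qD q k) x * tnth (qc q k) j | j < n].

End Defs.

Section Prob.
Context {dT : measure_display} {T : measurableType dT} {R : realType}.
Variable P : probability T R.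

(* g is a (nonnegative, measurable) version of E[Z | X], i.e. u |-> E[Z | X = u] *)
Definition is_cond_exp {dU : measure_display} (U : measurableType dU) (X : T -> U)
    (Z : T -> \bar R) (g : U -> \bar R) : Prop :=
  measurable_fun [set: U] g /\ (forall u, (0 <= g u)%E) /\
  forall A, measurable A ->
    (\int[P]_(w in X @^-1` A) Z w = \int[P]_(w in X @^-1` A) g (X w))%E.

Variables (d m : nat) (x : T -> d.-tuple R) (beta : d.-tuple R)
  (S : 'I_m -> {set 'I_d}) (K : 'I_m -> nat).

Definition xb (i : 'I_m) (w : T) : #|S i|.-tuple R := blk (S i) (x w).

Definition yhat (w : T) : R := dot (x w) beta.

(* ytilde = <xtilde, beta>, xtilde = x with each block x^(i) replaced by Q_i(x^(i)) *)
Definition ytilde (Q : forall i, quantizer R (K i) #|S i|) (w : T) : R :=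
  \sum_(i < m) dot (quantize (Q i) (xb i w)) (blk (S i) beta) +
  \sum_(r < d | [forall i : 'I_m, r \notin S i]) tnth (x w) r * tnth beta r.

Definition joint_risk (Q : forall i, quantizer R (K i) #|S i|) : \bar R :=
  (\int[P]_w ((ytilde Q w - yhat w) ^+ 2)%:E)%E.

Definition block_err (Q : forall i, quantizer R (K i) #|S i|) (i : 'I_m)
    (c : #|S i|.-tuple R) (w : T) : \bar R :=
  ((dot (tsub c (xb i w)) (blk (S i) beta) +
    \sum_(i' < m | i' != i)
       dot (tsub (quantize (Q i') (xb i' w)) (xb i' w)) (blk (S i') beta)) ^+ 2)%:E.

Definition block_objective (i : 'I_m)
    (mu : {measure set (#|S i|.-tuple R) -> \bar R})
    (p : #|S i|.-tuple R -> R)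
    (f : #|S i|.-tuple R -> #|S i|.-tuple R -> \bar R)
    (q : quantizer R (K i) #|S i|) : \bar R :=
  (\sum_(k < K i) \int[mu]_(u in qD q k) (f (qc q k) u * (p u)%:E))%E.
End Prob.

From HB Require Import structures.
From mathcomp Require Import all_boot all_order all_algebra.
From mathcomp Require Import all_classical all_reals all_analysis.
From mathcomp Require Import measurable_realfun.
Import Order.TTheory GRing.Theory Num.Theory.
Import numFieldNormedType.Exports.
Local Open Scope classical_set_scope.
Local Open Scope ring_scope.

Set Implicit Arguments. Unset Strict Implicit. Unset Printing Implicit Defensive.

(* Fix a block i and any valid quantizer q for it, and let Q' be the optimal
   family Q with Q_i replaced by q.  The events {x^(i) in D_k} over the cells of
   q partition the sample space; on the k-th of them the squared error of Q' is
   the block error at c = c_k, whose integral over the event is, by the defining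
   property of the conditional expectation, that of f(c_k, x^(i)), and then, by
   the density p_i, the integral of f(c_k, .) p_i over D_k.  So the block
   objective of q is the joint risk of Q', which is at least the joint risk of
   Q, i.e. the block objective of Q_i: Q_i is itself a minimizer. *)

Section density.
Local Open Scope ereal_scope.
Context d (U : measurableType d) (R : realType).
Variables (mu nu : {measure set U -> \bar R}) (p : U -> R).
Hypothesis mp : measurable_fun [set: U] p.
Hypothesis p_ge0 : forall u, (0 <= p u)%R.
Hypothesis nuE : forall A, measurable A -> nu A = \int[mu]_(u in A) (p u)%:E.
Import HBNNSimple.

Lemma integral_indic_density A E : measurable A -> measurable E ->
  \int[mu]_(u in E) ((\1_A u)%:E * (p u)%:E) = nu (A `&` E).
Proof.
move=> mA mE; rewrite nuE ?integral_mkcondl; last exact: measurableI.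
by apply: eq_integral => u _; rewrite epatch_indic /= muleC.
Qed.

Lemma integral_nnsfun_density (h : {nnsfun U >-> R}) E : measurable E ->
  \int[mu]_(u in E) ((h u)%:E * (p u)%:E) = \int[nu]_(u in E) (h u)%:E.
Proof.
move=> mE; pose ind y u : \bar R := (\1_(h @^-1` [set y]) u)%:E.
have hE u : (h u)%:E = \sum_(y \in range h) y%:E * ind y u.
  by rewrite fimfunE -fsumEFin //; apply: eq_fsbigr => y _; rewrite EFinM.
have pE_ge0 u : 0 <= (p u)%:E by rewrite lee_fin.
have ind_ge0 y u : 0 <= ind y u by rewrite lee_fin.
have hy_ge0 y u : 0 <= y%:E * ind y u by exact: nnfun_muleindic_ge0.
have hyp_ge0 y u : 0 <= y%:E * ind y u * (p u)%:E by exact: mule_ge0.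
have mpE : measurable_fun E (EFin \o p) by exact/measurable_funTS/measurable_EFinP.
have mind y : measurable_fun E (ind y).
  by apply/measurable_funTS/measurable_EFinP; exact/measurable_indic/measurable_funPTI.
have mhy y : measurable_fun E (fun u => y%:E * ind y u) by exact: measurable_funeM.
have mhyp y : measurable_fun E (fun u => y%:E * ind y u * (p u)%:E).
  exact: emeasurable_funM.
transitivity (\int[mu]_(u in E) \sum_(y \in range h) y%:E * ind y u * (p u)%:E).
  by apply: eq_integral => u _; rewrite hE ge0_mule_fsuml.
under [RHS]eq_integral do rewrite hE.
rewrite !ge0_integral_fsum //; apply: eq_fsbigr => y /[!inE] -[u _ <-].
under eq_integral do rewrite -muleA.
rewrite !ge0_integralZl ?lee_fin //.
- by rewrite integral_indic_density // integral_indic.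
- exact: emeasurable_funM.
- by move=> v _; exact: mule_ge0.
Qed.

Lemma ge0_integral_density f E : (forall u, 0 <= f u) -> measurable E ->
    measurable_fun E f ->
  \int[mu]_(u in E) (f u * (p u)%:E) = \int[nu]_(u in E) f u.
Proof.
move=> f_ge0 mE mf; pose h := nnsfun_approx mE mf.
have integral_approx (la : {measure set U -> \bar R}) (g : U -> R) :
    (forall u, (0 <= g u)%R) -> measurable_fun E g ->
    \int[la]_(u in E) (f u * (g u)%:E) =
    limn (fun n => \int[la]_(u in E) ((h n u)%:E * (g u)%:E)).
  move=> g_ge0 mg; rewrite -monotone_convergence //.
  - apply: eq_integral => u /[!inE] Eu; apply/esym/cvg_lim => //.
    exact/cvgeZr/cvg_nnsfun_approx.
  - move=> n; apply/measurable_EFinP/measurable_funM => //.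
    exact/measurable_funTS/measurable_funPT.
  - by move=> n u _; rewrite -EFinM lee_fin mulr_ge0.
  - move=> u _ n k le_nk; rewrite lee_wpmul2r ?lee_fin //.
    exact/lefP/nd_nnsfun_approx.
have -> : \int[nu]_(u in E) f u = \int[nu]_(u in E) (f u * (cst 1%R u)%:E).
  by apply: eq_integral => u _; rewrite mule1.
have approxE n : \int[mu]_(u in E) ((h n u)%:E * (p u)%:E) =
    \int[nu]_(u in E) ((h n u)%:E * (cst 1%R u)%:E).
  by rewrite integral_nnsfun_density //; apply: eq_integral => u _; rewrite mule1.
rewrite !integral_approx //; last exact: measurable_funTS.
by apply: (congr1 (fun u : nat -> \bar R => limn u)); exact: funext.
Qed.
End density.

Lemma ge0_integral_pushforward_density d1 d2 (V : measurableType d1)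
    (U : measurableType d2) (R : realType) (P : {measure set V -> \bar R})
    (mu : {measure set U -> \bar R}) (phi : V -> U) (p : U -> R) g E :
  measurable_fun [set: V] phi -> measurable_fun [set: U] p ->
  (forall u, 0 <= p u) ->
  (forall A, measurable A -> P (phi @^-1` A) = (\int[mu]_(u in A) (p u)%:E)%E) ->
  (forall u, 0 <= g u)%E -> measurable E -> measurable_fun E g ->
  (\int[mu]_(u in E) (g u * (p u)%:E) = \int[P]_(w in phi @^-1` E) g (phi w))%E.
Proof.
move=> mphi mp p_ge0 Pphi g_ge0 mE mg.
rewrite (ge0_integral_density (nu := pushforward P phi) mp) //.
by rewrite ge0_integral_pushforward.
Qed.

Lemma dfwith_id (I : eqType) (T_ : I -> Type) (f : forall i, T_ i) i :
  dfwith f i (f i) = f.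
Proof. by apply: functional_extensionality_dep => j; case: dfwithP. Qed.

Section tuples.
Variable R : realType.

Lemma dot_tsub n (a b c : n.-tuple R) : dot (tsub a b) c = dot a c - dot b c.
Proof. by rewrite /dot -sumrB; apply: eq_bigr => j _; rewrite tnth_mktuple mulrBl. Qed.

Lemma dot_blk d (A : {set 'I_d}) (v w : d.-tuple R) :
  dot (blk A v) (blk A w) = \sum_(r in A) tnth v r * tnth w r.
Proof. by rewrite big_enum_val; apply: eq_bigr => j _; rewrite !tnth_mktuple. Qed.

Lemma dot_blocks d m (S : 'I_m -> {set 'I_d}) (v w : d.-tuple R) :
  (forall i j, i != j -> S i :&: S j = finset.set0) ->
  dot v w = \sum_(j < m) dot (blk (S j) v) (blk (S j) w) +
            \sum_(r < d | [forall j, r \notin S j]) tnth v r * tnth w r.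
Proof.
move=> S_disj; rewrite /dot (bigID (fun r => r \in \bigcup_(j < m) S j)%SET) /=.
congr (_ + _).
  rewrite partition_disjoint_bigcup => [|i j ij]; last by rewrite -setI_eq0 S_disj.
  by apply: eq_bigr => j _; rewrite -dot_blk.
apply: eq_bigl => r; apply/negP/forallP => [r_out j|r_out /bigcupP[j _]].
  by apply/negP => rj; apply/r_out/bigcupP; exists j.
by apply/negP; exact: r_out.
Qed.

Section quantizer.
Variables (K n : nat) (q : quantizer R K n).

Lemma measurable_quantize :
  (forall k, measurable (qD q k)) -> measurable_fun [set: n.-tuple R] (quantize q).
Proof.
move=> q_meas; apply/measurable_fun_tnthP => j.
rewrite (_ : _ \o _ = fun u => \sum_(k < K) \1_(qD q k) u * tnth (qc q k) j).
  by apply: measurable_sum => k; apply: measurable_funM => //; exact: measurable_indic.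
by apply/funext => u; rewrite /= tnth_mktuple.
Qed.

Hypothesis q_valid : valid_quantizer q.

Lemma quantizer_cell_uniq k l u : qD q k u -> qD q l u -> k = l.
Proof.
have [_ [q_disj _]] := q_valid; move=> Dk Dl; case: (eqVneq k l) => // kl.
by have := q_disj _ _ kl; rewrite -subset0 => /(_ u (conj Dk Dl)).
Qed.

Lemma quantize_cell k u : qD q k u -> quantize q u = qc q k.
Proof.
move=> Dk; apply: eq_from_tnth => j; rewrite tnth_mktuple (bigD1 k) //=.
rewrite indicE mem_set // mul1r big1 ?addr0 // => l lk.
rewrite indicE memNset ?mul0r // => Dl.
by move/eqP: lk; apply; exact: quantizer_cell_uniq Dl Dk.
Qed.

Lemma ge0_integral_quantizer_cells d' (V : measurableType d')
    (P : {measure set V -> \bar R}) (phi : V -> n.-tuple R) (G : V -> \bar R) :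
  measurable_fun [set: V] phi -> measurable_fun [set: V] G -> (forall w, 0 <= G w)%E ->
  (\int[P]_w G w = \sum_(k < K) \int[P]_(w in phi @^-1` qD q k) G w)%E.
Proof.
have [q_meas [_ q_cover]] := q_valid; move=> mphi mG G_ge0.
have mcell k : measurable (phi @^-1` qD q k).
  by rewrite -[_ @^-1` _]setTI; exact: mphi.
have cellsT : \big[setU/set0]_(k <- index_enum 'I_K) (phi @^-1` qD q k) = [set: V].
  apply/seteqP; split => // w _; have [k Dk] := q_cover (phi w).
  by rewrite -bigcup_seq; exists k => //=; rewrite mem_index_enum.
rewrite -cellsT ge0_integral_bigsetU ?index_enum_uniq ?cellsT //.
by move=> k l _ _ [w [Dk Dl]]; exact: quantizer_cell_uniq Dk Dl.
Qed.

End quantizer.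
End tuples.

Section linear_model.
Context {dT : measure_display} {T : measurableType dT} {R : realType}.
Variables (d m : nat) (x : T -> d.-tuple R) (beta : d.-tuple R)
  (S : 'I_m -> {set 'I_d}).

Definition block_dev j L (q : quantizer R L #|S j|) (w : T) : R :=
  dot (tsub (quantize q (xb x S j w)) (xb x S j w)) (blk (S j) beta).

Lemma ytilde_sub_yhat (K : 'I_m -> nat) (Q : forall j, quantizer R (K j) #|S j|) w :
  (forall i j, i != j -> S i :&: S j = finset.set0) ->
  ytilde x beta Q w - yhat x beta w = \sum_(j < m) block_dev (Q j) w.
Proof.
move=> S_disj; rewrite /yhat (dot_blocks _ _ S_disj) /ytilde opprD addrACA subrr addr0.
by rewrite -sumrB; apply: eq_bigr => j _; rewrite /block_dev dot_tsub.
Qed.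

Hypothesis mx : measurable_fun [set: T] x.

Lemma measurable_xb j : measurable_fun [set: T] (xb x S j).
Proof.
apply/measurable_fun_tnthP => t; rewrite (_ : _ \o _ = fun w => tnth (x w) (enum_val t)).
  exact: measurableT_comp (measurable_tnth _) mx.
by apply/funext => w; rewrite /= tnth_mktuple.
Qed.

Lemma measurable_block_dev j L (q : quantizer R L #|S j|) :
  (forall k, measurable (qD q k)) -> measurable_fun [set: T] (block_dev q).
Proof.
move=> q_meas; apply: measurable_sum => t; apply: measurable_funM => //.
have mtnth (v : T -> #|S j|.-tuple R) : measurable_fun [set: T] v ->
    measurable_fun [set: T] (fun w => tnth (v w) t).
  by move=> mv; exact: measurableT_comp (measurable_tnth t) mv.
rewrite (_ : (fun w => _) = fun w => tnth (quantize q (xb x S j w)) t - tnth (xb x S j w) t).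
  apply: measurable_funB; apply: mtnth; last exact: measurable_xb.
  by apply: measurableT_comp; [exact: measurable_quantize | exact: measurable_xb].
by apply/funext => w; rewrite tnth_mktuple.
Qed.
End linear_model.

Section block_risk.
Context {dT : measure_display} {T : measurableType dT} {R : realType}.
Variables (P : probability T R) (d m : nat) (x : T -> d.-tuple R)
  (beta : d.-tuple R) (S : 'I_m -> {set 'I_d}) (K : 'I_m -> nat)
  (Q : forall j, quantizer R (K j) #|S j|) (i : 'I_m).
Hypothesis mx : measurable_fun [set: T] x.
Hypothesis S_disj : forall i j, i != j -> S i :&: S j = finset.set0.
Hypothesis Q_valid : forall j, valid_quantizer (Q j).

Lemma valid_dfwith q : valid_quantizer q -> forall j, valid_quantizer (dfwith Q i q j).
Proof. by move=> q_valid j; case: dfwithP. Qed.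

Lemma sq_err_dfwith_cell q k w : valid_quantizer q -> qD q k (xb x S i w) ->
  ((ytilde x beta (dfwith Q i q) w - yhat x beta w) ^+ 2)%:E =
  block_err x beta Q (qc q k) w.
Proof.
move=> q_valid Dk; rewrite ytilde_sub_yhat // (bigD1 i) //= dfwithin.
rewrite /block_dev (quantize_cell q_valid Dk); congr ((_ + _) ^+ 2)%:E.
by apply: eq_bigr => j ji; rewrite dfwithout // eq_sym.
Qed.

Variables (mu : {measure set (#|S i|.-tuple R) -> \bar R}) (p : #|S i|.-tuple R -> R)
  (f : #|S i|.-tuple R -> #|S i|.-tuple R -> \bar R).
Hypothesis mp : measurable_fun [set: #|S i|.-tuple R] p.
Hypothesis p_ge0 : forall u, 0 <= p u.
Hypothesis xb_density : forall A, measurable A ->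
  P (xb x S i @^-1` A) = (\int[mu]_(u in A) (p u)%:E)%E.
Hypothesis f_cond : forall c, is_cond_exp P (xb x S i) (block_err x beta Q c) (f c).

Lemma block_objective_joint_risk q : valid_quantizer q ->
  block_objective mu p f q = joint_risk P x beta (dfwith Q i q).
Proof.
move=> q_valid; have [q_meas _] := q_valid.
have mxb : measurable_fun [set: T] (xb x S i) by exact: measurable_xb.
rewrite /joint_risk (ge0_integral_quantizer_cells q_valid _ mxb); first last.
- by move=> w; rewrite lee_fin sqr_ge0.
- apply/measurable_EFinP/measurable_funX; under eq_fun do rewrite ytilde_sub_yhat //.
  apply: measurable_sum => j; apply: measurable_block_dev => // k.
  by have [] := valid_dfwith q_valid j.
apply: eq_bigr => k _; have [mfk [fk_ge0 fk_cond]] := f_cond (qc q k).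
rewrite (ge0_integral_pushforward_density mxb mp p_ge0 xb_density) //; last first.
  exact: measurable_funTS.
rewrite -fk_cond //; apply: eq_integral => w /[!inE] Dk.
by rewrite (sq_err_dfwith_cell q_valid Dk).
Qed.
End block_risk.

Theorem lemma1 (R : realType) (dT : measure_display) (T : measurableType dT)
  (P : probability T R) (d m : nat)
  (x : T -> d.-tuple R) (beta : d.-tuple R)
  (S : 'I_m -> {set 'I_d}) (K : 'I_m -> nat)
  (mu : forall i : 'I_m, {measure set (#|S i|.-tuple R) -> \bar R})
  (p : forall i : 'I_m, #|S i|.-tuple R -> R)
  (Q : forall i : 'I_m, quantizer R (K i) #|S i|) :
  measurable_fun [set: T] x ->
  (forall i, S i != finset.set0) ->
  (forall i j, i != j -> S i :&: S j = finset.set0) ->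
  (forall i, is_lebesgue_tuple (mu i)) ->
  (forall i, measurable_fun [set: #|S i|.-tuple R] (p i)) ->
  (forall i u, 0 <= p i u) ->
  (forall i (A : set (#|S i|.-tuple R)), measurable A ->
     P (xb x S i @^-1` A) = (\int[mu i]_(u in A) (p i u)%:E)%E) ->
  (* Q_1, ..., Q_m are optimal quantizers for min E[(ytilde - yhat)^2] *)
  (forall i, valid_quantizer (Q i)) ->
  (forall Q' : forall i : 'I_m, quantizer R (K i) #|S i|,
     (forall i, valid_quantizer (Q' i)) ->
     (joint_risk P x beta Q <= joint_risk P x beta Q')%E) ->
  forall i : 'I_m,
  forall f : #|S i|.-tuple R -> #|S i|.-tuple R -> \bar R,
  (* f(c, .) is a version of E[ block_err | x^(i) = . ] *)
  (forall c, is_cond_exp P (xb x S i) (block_err x beta Q (i:=i) c) (f c)) ->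
  exists qbar : quantizer R (K i) #|S i|,
    [/\ valid_quantizer qbar,
        quantize qbar =1 quantize (Q i) &
        forall q : quantizer R (K i) #|S i|, valid_quantizer q ->
          (block_objective (mu i) (p i) f qbar <= block_objective (mu i) (p i) f q)%E].
Proof.
move=> mx _ S_disj _ mp p_ge0 xb_density Q_valid Q_opt i f f_cond.
have objE := block_objective_joint_risk mx S_disj Q_valid (mp i) (p_ge0 i) (xb_density i) f_cond.
exists (Q i); split => // q q_valid.
rewrite !objE // dfwith_id; apply: Q_opt.
exact: valid_dfwith.
Qed.
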